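(* Let $c,d>0$ with $\frac1c+\frac1d\ge1$ and $g(x)=xF(c,d;c+d;x)$ for $x\in(0,1)$. Then for all $0<x<1$ and $p,q>0$, $$g\!\left(\frac{x^p}{1+x^p}\right)g\!\left(\frac{x^q}{1+x^q}\right)\le g\!\left(\frac{x^{p+q}}{1+x^{p+q}}\right).$$
   Context: $F(a,b;c;x)$ is the Gaussian hypergeometric function $\sum_{n\ge0}\frac{(a)_n(b)_n}{(c)_n}\frac{x^n}{n!}$ ($|x|<1$), with $(a)_n=a(a+1)\cdots(a+n-1)$, $(a)_0=1$. *)

From Stdlib Require Import Reals ClassicalEpsilon Arith Factorial.
Open Scope R_scope.

Fixpoint poch (a : R) (n : nat) : R :=
  match n with
  | O => 1
  | S k => poch a k * (a + INR k)
  end.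

Definition hyp_term (a b c x : R) (n : nat) : R :=
  poch a n * poch b n / poch c n * x ^ n / INR (Factorial.fact n).

(* F(a,b;c;x) := sum of the series (when it converges, which it does for |x|<1
   and c not a nonpositive integer); otherwise an unspecified default 0. *)
Definition hypF (a b c x : R) : R :=
  epsilon (inhabits 0)
    (fun l => infinite_sum (hyp_term a b c x) l).

Definition gfun (c d x : R) : R := x * hypF c d (c + d) x.

From Stdlib Require Import Reals Lra Psatz ClassicalEpsilon.
From Coquelicot Require Import Coquelicot.
Open Scope R_scope.

(* Write a_n = (c)_n (d)_n / ((c+d)_n n!) for the coefficients of
   F = F(c,d;c+d;.).  The hypothesis 1/c + 1/d >= 1 is c d <= c + d, which is
   exactly what makes a_{n+1}/a_n = (c+n)(d+n)/((c+d+n)(n+1)) <= 1, so the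
   coefficients decrease from a_0 = 1.  Consequently
       phi(y) := (1-y) F(y) = 1 + sum_{n>=1} (a_n - a_{n-1}) y^n
   has nonpositive higher coefficients: phi is nonincreasing on [0,1), hence
   0 <= phi <= phi(0) = 1 there.  Put h(t) := g(t/(1+t)) = t phi(t/(1+t)) for
   t > 0, and y_t := t/(1+t).  If 0 < s <= 1 then st <= t, and since t |-> y_t
   is increasing,
       h(t) h(s) = ts phi(y_t) phi(y_s) <= ts phi(y_t) <= ts phi(y_ts) = h(ts).
   The theorem is the case t = x^p, s = x^q (so ts = x^(p+q) and s < 1).
   The file first collects two facts on real series, then the properties of
   the coefficients a_n, the summation of hypF, the monotonicity of phi, and
   finally the supermultiplicativity of h. *)

Lemma is_series_zero : is_series (fun _ : nat => 0) 0.
Proof.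
  apply (filterlim_ext (fun _ => 0)); [|apply filterlim_const].
  intro n; rewrite sum_n_const; ring.
Qed.

Lemma is_series_le (a b : nat -> R) (la lb : R) :
  (forall n, a n <= b n) -> is_series a la -> is_series b lb -> la <= lb.
Proof.
  intros Hab Ha Hb.
  apply (is_lim_seq_le (sum_n a) (sum_n b) la lb); auto.
  intro n; now apply sum_n_m_le.
Qed.

Lemma is_series_nonneg (a : nat -> R) (l : R) :
  (forall n, 0 <= a n) -> is_series a l -> 0 <= l.
Proof. intros Ha Hl; exact (is_series_le _ _ _ _ Ha is_series_zero Hl). Qed.

Lemma poch_pos (a : R) (n : nat) : 0 < a -> 0 < poch a n.
Proof.
  intro Ha; induction n as [|n IH]; simpl; [lra|].
  apply Rmult_lt_0_compat; [exact IH|]. pose proof (pos_INR n); lra.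
Qed.

Lemma hypF_eq_of_infinite_sum (a b c x l : R) :
  infinite_sum (hyp_term a b c x) l -> hypF a b c x = l.
Proof.
  intro Hl; unfold hypF.
  apply (uniqueness_sum (hyp_term a b c x)); [|exact Hl].
  apply (epsilon_spec (inhabits 0) (fun l => infinite_sum (hyp_term a b c x) l)).
  now exists l.
Qed.

Lemma hypF_at_0 (a b c : R) : hypF a b c 0 = 1.
Proof.
  apply hypF_eq_of_infinite_sum, is_series_Reals, is_series_decr_1.
  apply (is_series_ext (fun _ => 0)); last first.
  - match goal with |- is_series _ ?l => replace l with 0 end; [exact is_series_zero|].
    unfold hyp_term, plus, opp; simpl; field.
  - intro n; unfold hyp_term, Rdiv; simpl; ring.
Qed.

Section Coefficients.

Variables c d : R.
Hypotheses (hc : 0 < c) (hd : 0 < d).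

Definition hyp_coef (n : nat) : R :=
  poch c n * poch d n / poch (c + d) n / INR (Factorial.fact n).

Lemma hyp_term_coef (y : R) (n : nat) : hyp_term c d (c + d) y n = hyp_coef n * y ^ n.
Proof. unfold hyp_term, hyp_coef, Rdiv; ring. Qed.

Lemma hyp_coef_0 : hyp_coef 0 = 1.
Proof. unfold hyp_coef; simpl; field. Qed.

Lemma hyp_coef_pos (n : nat) : 0 < hyp_coef n.
Proof.
  unfold hyp_coef, Rdiv.
  pose proof (poch_pos c n hc); pose proof (poch_pos d n hd).
  pose proof (poch_pos (c + d) n ltac:(lra)); pose proof (INR_fact_lt_0 n).
  repeat apply Rmult_lt_0_compat; auto; apply Rinv_0_lt_compat; auto.
Qed.

Lemma hyp_coef_S (n : nat) :
  hyp_coef (S n) =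
  hyp_coef n * ((c + INR n) * (d + INR n) / ((c + d + INR n) * (INR n + 1))).
Proof.
  unfold hyp_coef; simpl poch; rewrite fact_simpl, mult_INR, S_INR.
  pose proof (poch_pos c n hc); pose proof (poch_pos d n hd).
  pose proof (poch_pos (c + d) n ltac:(lra)).
  pose proof (INR_fact_lt_0 n); pose proof (pos_INR n).
  field; repeat split; lra.
Qed.

Hypothesis hcd : c * d <= c + d.

Lemma hyp_coef_decr (n : nat) : hyp_coef (S n) <= hyp_coef n.
Proof.
  rewrite hyp_coef_S.
  pose proof (hyp_coef_pos n); pose proof (pos_INR n).
  assert (ratio_le_1 :
    (c + INR n) * (d + INR n) / ((c + d + INR n) * (INR n + 1)) <= 1).
  { apply Rmult_le_reg_r with ((c + d + INR n) * (INR n + 1)); [nra|].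
    unfold Rdiv; rewrite Rmult_assoc, Rinv_l; nra. }
  nra.
Qed.

Lemma hyp_coef_le_1 (n : nat) : hyp_coef n <= 1.
Proof.
  induction n as [|n IH]; [rewrite hyp_coef_0; lra|].
  pose proof (hyp_coef_decr n); lra.
Qed.

(* For |y| < 1 the series converges (it is dominated by the geometric one),
   so hypF is its sum. *)
Lemma hypF_is_series (y : R) :
  Rabs y < 1 -> is_series (fun n => hyp_coef n * y ^ n) (hypF c d (c + d) y).
Proof.
  intro hy.
  assert (Hex : ex_series (fun n => hyp_coef n * y ^ n)).
  { apply (@ex_series_le R_AbsRing R_CompleteNormedModule _ (fun n => Rabs y ^ n));
      [|now apply ex_series_geom; rewrite Rabs_Rabsolu].
    intro n; change (Rabs (hyp_coef n * y ^ n) <= Rabs y ^ n).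
    rewrite Rabs_mult, <- RPow_abs, (Rabs_right (hyp_coef n));
      [|apply Rle_ge, Rlt_le, hyp_coef_pos].
    pose proof (hyp_coef_le_1 n); pose proof (pow_le (Rabs y) n (Rabs_pos y)); nra. }
  destruct Hex as [l Hl].
  rewrite (hypF_eq_of_infinite_sum c d (c + d) y l); [exact Hl|].
  apply is_series_Reals, (is_series_ext _ _ _ (fun n => eq_sym (hyp_term_coef y n)) Hl).
Qed.

Lemma hypF_nonneg (y : R) : 0 <= y < 1 -> 0 <= hypF c d (c + d) y.
Proof.
  intro hy.
  apply (is_series_nonneg (fun n => hyp_coef n * y ^ n));
    [|apply hypF_is_series; rewrite Rabs_right; lra].
  intro n; pose proof (hyp_coef_pos n); pose proof (pow_le y n ltac:(lra)); nra.
Qed.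

End Coefficients.

Section Phi.

Variables c d : R.
Hypotheses (hc : 0 < c) (hd : 0 < d) (hcd : c * d <= c + d).

Definition phi (y : R) : R := (1 - y) * hypF c d (c + d) y.

Definition phi_coef (n : nat) : R :=
  hyp_coef c d n - match n with O => 0 | S k => hyp_coef c d k end.

Lemma phi_coef_nonpos (k : nat) : phi_coef (S k) <= 0.
Proof. pose proof (hyp_coef_decr c d hc hd hcd k); unfold phi_coef; lra. Qed.

Lemma phi_is_series (y : R) :
  Rabs y < 1 -> is_series (fun n => phi_coef n * y ^ n) (phi y).
Proof.
  intro hy.
  pose proof (hypF_is_series c d hc hd hcd y hy) as HF.
  set (F := hypF c d (c + d) y) in *.
  set (shifted := fun n => match n with O => 0 | S k => hyp_coef c d k * y ^ n end).
  assert (HS : is_series shifted (y * F)).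
  { apply is_series_decr_1; unfold shifted at 2.
    match goal with |- is_series _ ?l => replace l with (scal y F)
      by (unfold plus, opp, scal; simpl; unfold mult; simpl; ring) end.
    apply (is_series_ext (fun n => scal y (hyp_coef c d n * y ^ n))).
    - intro n; unfold scal; simpl; unfold mult; simpl; ring.
    - exact (is_series_scal y _ _ HF). }
  apply (is_series_ext (fun n => plus (hyp_coef c d n * y ^ n) (opp (shifted n)))).
  - intro n; unfold plus, opp, shifted, phi_coef; simpl.
    destruct n; simpl; ring.
  - unfold phi; fold F.
    match goal with |- is_series _ ?l => replace l with (plus F (opp (y * F)))
      by (unfold plus, opp; simpl; ring) end.
    exact (is_series_minus _ _ _ _ HF HS).
Qed.

Lemma phi_antitone (y1 y2 : R) : 0 <= y1 -> y1 <= y2 -> y2 < 1 -> phi y2 <= phi y1.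
Proof.
  intros h1 h12 h2.
  apply (is_series_le (fun n => phi_coef n * y2 ^ n) (fun n => phi_coef n * y1 ^ n));
    [| apply phi_is_series; rewrite Rabs_right; lra ..].
  intros [|k]; [simpl; lra|].
  pose proof (phi_coef_nonpos k).
  assert (y1 ^ S k <= y2 ^ S k) by (apply pow_incr; lra).
  nra.
Qed.

Lemma phi_le_1 (y : R) : 0 <= y < 1 -> phi y <= 1.
Proof.
  intro hy.
  replace 1 with (phi 0) by (unfold phi; rewrite hypF_at_0; ring).
  apply phi_antitone; lra.
Qed.

Lemma phi_nonneg (y : R) : 0 <= y < 1 -> 0 <= phi y.
Proof.
  intro hy; unfold phi.
  pose proof (hypF_nonneg c d hc hd hcd y hy); apply Rmult_le_pos; lra.
Qed.

End Phi.

Lemma frac_range (t : R) : 0 < t -> 0 <= t / (1 + t) < 1.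
Proof.
  intro ht; split.
  - apply Rmult_le_pos; [lra|left; apply Rinv_0_lt_compat; lra].
  - apply Rmult_lt_reg_r with (1 + t); [lra|].
    unfold Rdiv; rewrite Rmult_assoc, Rinv_l; lra.
Qed.

Lemma frac_monotone (s t : R) : 0 < s -> s <= t -> s / (1 + s) <= t / (1 + t).
Proof.
  intros hs hst.
  apply Rmult_le_reg_r with ((1 + s) * (1 + t)); [nra|].
  replace (s / (1 + s) * ((1 + s) * (1 + t))) with (s * (1 + t)) by (field; lra).
  replace (t / (1 + t) * ((1 + s) * (1 + t))) with (t * (1 + s)) by (field; lra).
  nra.
Qed.

(* In the variable t, g becomes t phi(t/(1+t)), since 1 - t/(1+t) = 1/(1+t). *)
Lemma gfun_frac (c d t : R) : 0 < t -> gfun c d (t / (1 + t)) = t * phi c d (t / (1 + t)).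
Proof. intro ht; unfold gfun, phi; field; lra. Qed.

(* Supermultiplicativity of h(t) = g(t/(1+t)) when one factor lies in (0,1]:
   with y_t = t/(1+t):
   h(t) h(s) = ts phi(y_t) phi(y_s) <= ts phi(y_t) <= ts phi(y_ts) = h(ts). *)
Lemma gfun_frac_supermult (c d t s : R) :
  0 < c -> 0 < d -> c * d <= c + d -> 0 < t -> 0 < s <= 1 ->
  gfun c d (t / (1 + t)) * gfun c d (s / (1 + s))
  <= gfun c d (t * s / (1 + t * s)).
Proof.
  intros hc hd hcd ht hs.
  assert (hts : 0 < t * s <= t) by nra.
  rewrite !gfun_frac by lra.
  pose proof (frac_range t ltac:(lra)) as Rt.
  pose proof (frac_range s ltac:(lra)) as Rs.
  pose proof (frac_range (t * s) ltac:(lra)) as Rts.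
  pose proof (frac_monotone (t * s) t ltac:(lra) ltac:(lra)) as Mts.
  assert (phi_t_le_phi_ts : phi c d (t / (1 + t)) <= phi c d (t * s / (1 + t * s)))
    by (apply phi_antitone; lra).
  pose proof (phi_le_1 c d hc hd hcd (s / (1 + s)) Rs).
  pose proof (phi_nonneg c d hc hd hcd (t / (1 + t)) Rt).
  pose proof (phi_nonneg c d hc hd hcd (s / (1 + s)) Rs).
  replace (t * phi c d (t / (1 + t)) * (s * phi c d (s / (1 + s))))
    with ((t * s) * (phi c d (t / (1 + t)) * phi c d (s / (1 + s)))) by ring.
  apply Rmult_le_compat_l; nra.
Qed.

Lemma harmonic_condition (c d : R) :
  0 < c -> 0 < d -> 1 / c + 1 / d >= 1 -> c * d <= c + d.
Proof.
  intros hc hd h.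
  replace (1 / c + 1 / d) with ((c + d) / (c * d)) in h by (field; lra).
  apply Rge_le in h.
  apply Rmult_le_compat_r with (r := c * d) in h; [|nra].
  unfold Rdiv in h; rewrite Rmult_assoc, Rinv_l in h; nra.
Qed.

Lemma Rpower_in_unit (x q : R) : 0 < x < 1 -> 0 < q -> 0 < Rpower x q < 1.
Proof.
  intros hx hq; unfold Rpower; split; [apply exp_pos|].
  rewrite <- exp_0; apply exp_increasing.
  assert (ln x < 0) by (rewrite <- ln_1; apply ln_increasing; lra).
  nra.
Qed.

Theorem mainTheorem16 (c d : R) (hc : 0 < c) (hd : 0 < d)
  (hcd : 1 / c + 1 / d >= 1) (x p q : R)
  (hx0 : 0 < x) (hx1 : x < 1) (hp : 0 < p) (hq : 0 < q) :
  gfun c d (Rpower x p / (1 + Rpower x p)) *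
  gfun c d (Rpower x q / (1 + Rpower x q))
  <= gfun c d (Rpower x (p + q) / (1 + Rpower x (p + q))).
Proof.
  rewrite Rpower_plus.
  pose proof (Rpower_in_unit x p ltac:(lra) hp).
  pose proof (Rpower_in_unit x q ltac:(lra) hq).
  apply gfun_frac_supermult; try lra.
  now apply harmonic_condition.
Qed.
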